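(* Let $f:\mathbb{R}^n\to\mathbb{R}$ and $c:\mathbb{R}^n\to\mathbb{R}^m$, and let $\{x_k\}$, $\{d_k\}$, $\{y_k\}$ be generated by either Algorithm 1 or Algorithm 2 (described in the context) applied to $\min_x f(x)$ subject to $c(x)=0$. Suppose the Standing Assumption and the Matrix Assumption of the context hold, and that the algorithm does not terminate finitely. Then $$\lim_{k\to\infty}\|d_k\|_2=0,\qquad \lim_{k\to\infty}\|c_k\|_2=0,\qquad \lim_{k\to\infty}\|g_k+J_k^Ty_k\|_2=0.$$
   Context: Notation: $g_k=\nabla f(x_k)$, $c_k=c(x_k)$, $J_k=\nabla c(x_k)^T\in\mathbb{R}^{m\times n}$. Merit function $\phi(x,\tau)=\tau f(x)+\|c(x)\|_1$ for $\tau>0$. Model reduction: $\Delta q(x,\tau,g,H,d)=-\tau\big(g^Td+\tfrac12\max\{d^THd,0\}\big)+\|c(x)\|_1$. Matrix Assumption: $\{H_k\}$ are symmetric $n\times n$ matrices with $\|H_k\|_2\le\kappa_H$ and $u^TH_ku\ge\zeta\|u\|_2^2$ for all $u$ with $J_ku=0$, for constants $\kappa_H,\zeta>0$. Common iteration ($k=0,1,\dots$): $(d_k,y_k)$ solves $H_kd_k+J_k^Ty_k=-g_k$, $J_kd_k=-c_k$. If $g_k+J_k^Ty_k=0$ and $c_k=0$, stop. Otherwise set $\tau_k^{trial}=\infty$ if $g_k^Td_k+\max\{d_k^TH_kd_k,0\}\le0$ and $\tau_k^{trial}=\frac{(1-\sigma)\|c_k\|_1}{g_k^Td_k+\max\{d_k^TH_kd_k,0\}}$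 otherwise; set $\tau_k=\tau_{k-1}$ if $\tau_{k-1}\le\tau_k^{trial}$ and $\tau_k=(1-\epsilon)\tau_k^{trial}$ otherwise. Then choose $\alpha_k>0$ and set $x_{k+1}=x_k+\alpha_kd_k$. The sufficient decrease condition for a trial stepsize $\alpha$ is (SD): $\phi(x_k+\alpha d_k,\tau_k)\le\phi(x_k,\tau_k)-\eta\alpha\,\Delta q(x_k,\tau_k,g_k,H_k,d_k)$. Algorithm 1 (inputs $x_0$, $\tau_{-1}>0$, $\epsilon,\sigma,\eta\in(0,1)$, $\rho>1$, $L_{-1}>0$, $\gamma_{-1,i}>0$ for $i=1,\dots,m$): choose $L_{k,0}\in(0,L_{k-1}]$ and $\gamma_{k,i,0}\in(0,\gamma_{k-1,i}]$. For $j=0,1,\dots$: with $\Lambda_{k,j}=\tau_kL_{k,j}+\sum_i\gamma_{k,i,j}$, set $\widehat\alpha_{k,j}=\frac{2(1-\eta)\Delta q(x_k,\tau_k,g_k,H_k,d_k)}{\Lambda_{k,j}\|d_k\|_2^2}$, $\widetilde\alpha_{k,j}=\widehat\alpha_{k,j}-\frac{4\|c_k\|_1}{\Lambda_{k,j}\|d_k\|_2^2}$, and $\alpha_{k,j}=\widehat\alpha_{k,j}$ if $\widehat\alpha_{k,j}<1$, $\alpha_{k,j}=1$ if $\widetilde\alpha_{k,j}\le1\le\widehat\alpha_{k,j}$, $\alpha_{k,j}=\widetilde\alpha_{k,j}$ if $\widetilde\alpha_{k,j}>1$. Let (LF) be $f(x_k+\alpha_{k,j}d_k)\le f(x_k)+\alpha_{k,j}g_k^Td_k+\tfrac12L_{k,j}\alpha_{k,j}^2\|d_k\|_2^2$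 and (LC$_i$) be $|c_i(x_k+\alpha_{k,j}d_k)|\le|c_i(x_k)+\alpha_{k,j}\nabla c_i(x_k)^Td_k|+\tfrac12\gamma_{k,i,j}\alpha_{k,j}^2\|d_k\|_2^2$. If (SD) holds with $\alpha=\alpha_{k,j}$, or (LF) and all (LC$_i$) hold, set $L_k=L_{k,j}$, $\gamma_{k,i}=\gamma_{k,i,j}$, $\alpha_k=\alpha_{k,j}$ and end the inner loop; otherwise set $L_{k,j+1}=\rho L_{k,j}$ if (LF) fails (else $L_{k,j}$), and $\gamma_{k,i,j+1}=\rho\gamma_{k,i,j}$ if (LC$_i$) fails (else $\gamma_{k,i,j}$). Algorithm 2 (inputs $x_0$, $\tau_{-1}>0$, $\epsilon,\sigma,\eta,\nu\in(0,1)$, $\alpha>0$): $\alpha_k=\alpha_{k,j}=\nu^j\alpha$ for the smallest $j\in\{0,1,\dots\}$ such that (SD) holds with $\alpha=\alpha_{k,j}$. Standing Assumption: there is an open convex set $\mathcal X\subseteq\mathbb{R}^n$ containing all iterates $x_k$ and all trial points $x_k+\alpha_{k,j}d_k$; $f$ is continuously differentiable and bounded below on $\mathcal X$; $\nabla f$ is bounded and Lipschitz with constant $L$ on $\mathcal X$; $c$ and $\nabla c^T$ are bounded on $\mathcal X$; each $\nabla c_i$ is Lipschitz with constant $\gamma_i$ on $\mathcal X$; the singular values of $\nabla c(x)^T$ are bounded away from zero uniformly over $x\in\mathcal X$. *)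

From HB Require Import structures.
From mathcomp Require Import all_boot all_order all_algebra.
From mathcomp Require Import reals.
Set Implicit Arguments. Unset Strict Implicit. Unset Printing Implicit Defensive.
Import Order.TTheory GRing.Theory Num.Theory.
Local Open Scope ring_scope.

Section Defs.
Variable R : realType.

Definition dotv n (u v : 'cV[R]_n) : R := \sum_(i < n) u i ord0 * v i ord0.
Definition norm2 n (u : 'cV[R]_n) : R := Num.sqrt (\sum_(i < n) u i ord0 ^+ 2).
Definition norm1 n (u : 'cV[R]_n) : R := \sum_(i < n) `|u i ord0|.
Definition frob m n (A : 'M[R]_(m, n)) : R :=
  Num.sqrt (\sum_(i < m) \sum_(j < n) A i j ^+ 2).

Definition lim0 (u : nat -> R) : Prop :=
  forall e : R, 0 < e -> exists N : nat, forall k, (N <= k)%N -> `|u k| < e.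

Definition has_gradient n (F : 'cV[R]_n -> R) (G : 'cV[R]_n) (x : 'cV[R]_n) : Prop :=
  forall e : R, 0 < e -> exists2 delta : R, 0 < delta &
    forall z, norm2 (z - x) < delta ->
      `|F z - F x - dotv G (z - x)| <= e * norm2 (z - x).

Definition open_set n (X : 'cV[R]_n -> Prop) : Prop :=
  forall x, X x -> exists2 r : R, 0 < r & forall z, norm2 (z - x) < r -> X z.

Definition convex_set n (X : 'cV[R]_n -> Prop) : Prop :=
  forall x z (t : R), X x -> X z -> 0 <= t <= 1 -> X (t *: x + (1 - t) *: z).

(* gradient of c_i at x: transpose of row i of the Jacobian J(x) = grad c(x)^T *)
Definition gradc n m (J : 'cV[R]_n -> 'M[R]_(m, n)) (x : 'cV[R]_n) (i : 'I_m)
  : 'cV[R]_n := (row i (J x))^T.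

(* all singular values of the m x n matrix A are >= s
   (smallest singular value = min over unit vectors of |A^T v| if m <= n,
    of |A u| if n <= m) *)
Definition min_sv_ge m n (A : 'M[R]_(m, n)) (s : R) : Prop :=
  ((m <= n)%N -> forall v : 'cV[R]_m, s * norm2 v <= norm2 (A^T *m v)) /\
  ((n <= m)%N -> forall u : 'cV[R]_n, s * norm2 u <= norm2 (A *m u)).

(* Standing Assumption (except "X contains iterates / trial points", stated separately) *)
Definition standing_assumption n m (X : 'cV[R]_n -> Prop) (f : 'cV[R]_n -> R)
  (gf : 'cV[R]_n -> 'cV[R]_n) (c : 'cV[R]_n -> 'cV[R]_m)
  (J : 'cV[R]_n -> 'M[R]_(m, n)) : Prop :=
  open_set X /\ convex_set X /\
  (forall x, X x -> has_gradient f (gf x) x) /\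
  (forall x, X x -> forall e : R, 0 < e -> exists2 delta : R, 0 < delta &
      forall z, X z -> norm2 (z - x) < delta -> norm2 (gf z - gf x) < e) /\
  (forall x, X x -> forall i : 'I_m,
      has_gradient (fun z => c z i ord0) (gradc J x i) x) /\
  (exists flow : R, forall x, X x -> flow <= f x) /\
  (exists B : R, forall x, X x -> norm2 (gf x) <= B) /\
  (exists L : R, forall x z, X x -> X z -> norm2 (gf x - gf z) <= L * norm2 (x - z)) /\
  (exists B : R, forall x, X x -> norm2 (c x) <= B) /\
  (exists B : R, forall x, X x -> frob (J x) <= B) /\
  (forall i : 'I_m, exists gam : R, forall x z, X x -> X z ->
      norm2 (gradc J x i - gradc J z i) <= gam * norm2 (x - z)) /\
  (exists2 s : R, 0 < s & forall x, X x -> min_sv_ge (J x) s).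

Definition matrix_assumption n m (H : nat -> 'M[R]_n) (Jk : nat -> 'M[R]_(m, n)) : Prop :=
  exists kH zeta : R, 0 < kH /\ 0 < zeta /\
    forall k, (H k)^T = H k /\
      (forall u : 'cV[R]_n, norm2 (H k *m u) <= kH * norm2 u) /\
      (forall u : 'cV[R]_n, Jk k *m u = 0 -> zeta * norm2 u ^+ 2 <= dotv u (H k *m u)).

Definition merit n m (f : 'cV[R]_n -> R) (c : 'cV[R]_n -> 'cV[R]_m) (x : 'cV[R]_n)
  (tau : R) : R := tau * f x + norm1 (c x).

Definition dq n m (c : 'cV[R]_n -> 'cV[R]_m) (x : 'cV[R]_n) (tau : R)
  (g : 'cV[R]_n) (H : 'M[R]_n) (d : 'cV[R]_n) : R :=
  - tau * (dotv g d + 2^-1 * Num.max (dotv d (H *m d)) 0) + norm1 (c x).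

Definition tau_next n (eps sig taup : R) (g : 'cV[R]_n) (H : 'M[R]_n) (d : 'cV[R]_n)
  (cx1 : R) : R :=
  let den := dotv g d + Num.max (dotv d (H *m d)) 0 in
  if den <= 0 then taup (* tau_trial = +oo *)
  else let tr := (1 - sig) * cx1 / den in
       if taup <= tr then taup else (1 - eps) * tr.

Definition common_iteration n m (gf : 'cV[R]_n -> 'cV[R]_n) (c : 'cV[R]_n -> 'cV[R]_m)
  (J : 'cV[R]_n -> 'M[R]_(m, n)) (H : nat -> 'M[R]_n) (x d : nat -> 'cV[R]_n)
  (y : nat -> 'cV[R]_m) (tau alpha : nat -> R) (tau0 eps sig : R) : Prop :=
  forall k,
    H k *m d k + (J (x k))^T *m y k = - gf (x k) /\
    J (x k) *m d k = - c (x k) /\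
    tau k = tau_next eps sig (if k is k'.+1 then tau k' else tau0)
              (gf (x k)) (H k) (d k) (norm1 (c (x k))) /\
    0 < alpha k /\
    x k.+1 = x k + alpha k *: d k.

Definition no_finite_termination n m (gf : 'cV[R]_n -> 'cV[R]_n)
  (c : 'cV[R]_n -> 'cV[R]_m) (J : 'cV[R]_n -> 'M[R]_(m, n))
  (x : nat -> 'cV[R]_n) (y : nat -> 'cV[R]_m) : Prop :=
  forall k, ~ (gf (x k) + (J (x k))^T *m y k = 0 /\ c (x k) = 0).

Definition SD n m (f : 'cV[R]_n -> R) (gf : 'cV[R]_n -> 'cV[R]_n)
  (c : 'cV[R]_n -> 'cV[R]_m) (H : nat -> 'M[R]_n) (x d : nat -> 'cV[R]_n)
  (tau : nat -> R) (eta : R) (k : nat) (a : R) : Prop :=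
  merit f c (x k + a *: d k) (tau k) <=
  merit f c (x k) (tau k) - eta * a * dq c (x k) (tau k) (gf (x k)) (H k) (d k).

Definition alg1_step (eta Lam dqv cx1 nd2 : R) : R :=
  let ahat := 2 * (1 - eta) * dqv / (Lam * nd2) in
  let atil := ahat - 4 * cx1 / (Lam * nd2) in
  if ahat < 1 then ahat else if atil <= 1 then 1 else atil.

(* The stepsizes alpha are produced by Algorithm 1 (with inner-loop data
   L_{k,j}, gamma_{k,i,j}, and terminating inner index jk k); all trial points lie in X. *)
Definition generated_by_alg1 n m (X : 'cV[R]_n -> Prop) (f : 'cV[R]_n -> R)
  (gf : 'cV[R]_n -> 'cV[R]_n) (c : 'cV[R]_n -> 'cV[R]_m)
  (J : 'cV[R]_n -> 'M[R]_(m, n)) (H : nat -> 'M[R]_n) (x d : nat -> 'cV[R]_n)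
  (tau alpha : nat -> R) (eta rho Lm1 : R) (gm1 : 'I_m -> R) : Prop :=
  1 < rho /\ 0 < Lm1 /\ (forall i, 0 < gm1 i) /\
  exists (Lkj : nat -> nat -> R) (gkj : nat -> nat -> 'I_m -> R) (jk : nat -> nat),
    let Lprev k := if k is k'.+1 then Lkj k' (jk k') else Lm1 in
    let gprev k i := if k is k'.+1 then gkj k' (jk k') i else gm1 i in
    let a k j := alg1_step eta (tau k * Lkj k j + \sum_(i < m) gkj k j i)
                   (dq c (x k) (tau k) (gf (x k)) (H k) (d k))
                   (norm1 (c (x k))) (norm2 (d k) ^+ 2) in
    let LF k j := f (x k + a k j *: d k) <=
                  f (x k) + a k j * dotv (gf (x k)) (d k)
                  + 2^-1 * Lkj k j * a k j ^+ 2 * norm2 (d k) ^+ 2 in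
    let LC k j i := `|c (x k + a k j *: d k) i ord0| <=
                  `|c (x k) i ord0 + a k j * dotv (gradc J (x k) i) (d k)|
                  + 2^-1 * gkj k j i * a k j ^+ 2 * norm2 (d k) ^+ 2 in
    let acc k j := SD f gf c H x d tau eta k (a k j) \/ (LF k j /\ forall i, LC k j i) in
    forall k,
      (0 < Lkj k 0%N /\ Lkj k 0%N <= Lprev k) /\
      (forall i, 0 < gkj k 0%N i /\ gkj k 0%N i <= gprev k i) /\
      (forall j, (j < jk k)%N ->
         ~ acc k j /\
         (LF k j -> Lkj k j.+1 = Lkj k j) /\ (~ LF k j -> Lkj k j.+1 = rho * Lkj k j) /\
         (forall i, (LC k j i -> gkj k j.+1 i = gkj k j i) /\
                    (~ LC k j i -> gkj k j.+1 i = rho * gkj k j i))) /\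
      acc k (jk k) /\
      alpha k = a k (jk k) /\
      (forall j, (j <= jk k)%N -> X (x k + a k j *: d k)).

Definition generated_by_alg2 n m (X : 'cV[R]_n -> Prop) (f : 'cV[R]_n -> R)
  (gf : 'cV[R]_n -> 'cV[R]_n) (c : 'cV[R]_n -> 'cV[R]_m)
  (H : nat -> 'M[R]_n) (x d : nat -> 'cV[R]_n)
  (tau alpha : nat -> R) (eta nu abar : R) : Prop :=
  0 < nu < 1 /\ 0 < abar /\
  forall k, exists jk : nat,
    alpha k = nu ^+ jk * abar /\
    SD f gf c H x d tau eta k (nu ^+ jk * abar) /\
    (forall j, (j < jk)%N -> ~ SD f gf c H x d tau eta k (nu ^+ j * abar)) /\
    (forall j, (j <= jk)%N -> X (x k + (nu ^+ j * abar) *: d k)).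

End Defs.

From HB Require Import structures.
From mathcomp Require Import all_boot all_order all_algebra.
From mathcomp Require Import reals classical_sets boolp.
From mathcomp Require Import ring lra.
Import Order.TTheory GRing.Theory Num.Theory.
Local Open Scope ring_scope.
Set Implicit Arguments. Unset Strict Implicit. Unset Printing Implicit Defensive.

(* With s a lower bound on the singular values of J_k, split d_k = u + v with
   J_k u = 0 and |v| <= |c_k| / s.  The Matrix Assumption and the first block
   row of the KKT system then bound g_k^T d_k + max (d_k^T H_k d_k, 0) by a
   multiple of |c_k|_1, which keeps the merit parameter tau_k bounded away from
   0 and gives dq_k >= sig |c_k|_1 and dq_k >= kq |d_k|^2 for some kq > 0.  By
   the descent lemma for the Lipschitz gradients of f and of the c_i, every
   step shorter than a fixed threshold satisfies (SD), so both line searches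
   return stepsizes bounded below by some amin > 0.  With flow a lower bound of
   f, the shifted merit function tau_k (f x_k - flow) + |c_k|_1 is nonnegative
   and decreases by at least eta amin dq_k at each iteration, so dq_k -> 0;
   hence d_k -> 0, c_k -> 0 and g_k + J_k^T y_k = - H_k d_k -> 0. *)

Section InnerProduct.
Variable R : realType.
Implicit Types (n : nat) (a : R).

Lemma dotv_mulmx n (u v : 'cV[R]_n) : dotv u v = (u^T *m v) ord0 ord0.
Proof. by rewrite /dotv mxE; apply: eq_bigr => i _; rewrite mxE. Qed.

Lemma dotvC n (u v : 'cV[R]_n) : dotv u v = dotv v u.
Proof. by apply: eq_bigr => i _; rewrite mulrC. Qed.

Lemma dotvDl n (u v w : 'cV[R]_n) : dotv (u + v) w = dotv u w + dotv v w.
Proof. by rewrite /dotv -big_split; apply: eq_bigr => i _; rewrite mxE mulrDl. Qed.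

Lemma dotvDr n (u v w : 'cV[R]_n) : dotv w (u + v) = dotv w u + dotv w v.
Proof. by rewrite dotvC dotvDl !(dotvC w). Qed.

Lemma dotvZl n a (u w : 'cV[R]_n) : dotv (a *: u) w = a * dotv u w.
Proof. by rewrite /dotv mulr_sumr; apply: eq_bigr => i _; rewrite mxE mulrA. Qed.

Lemma dotvZr n a (u w : 'cV[R]_n) : dotv w (a *: u) = a * dotv w u.
Proof. by rewrite dotvC dotvZl dotvC. Qed.

Lemma dotvNl n (u w : 'cV[R]_n) : dotv (- u) w = - dotv u w.
Proof. by rewrite -scaleN1r dotvZl mulN1r. Qed.

Lemma dotvNr n (u w : 'cV[R]_n) : dotv w (- u) = - dotv w u.
Proof. by rewrite dotvC dotvNl dotvC. Qed.

Lemma dotvBl n (u v w : 'cV[R]_n) : dotv (u - v) w = dotv u w - dotv v w.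
Proof. by rewrite dotvDl dotvNl. Qed.

Lemma dotvBr n (u v w : 'cV[R]_n) : dotv w (u - v) = dotv w u - dotv w v.
Proof. by rewrite dotvDr dotvNr. Qed.

Lemma dotv0r n (u : 'cV[R]_n) : dotv u 0 = 0.
Proof. by rewrite /dotv big1 // => i _; rewrite mxE mulr0. Qed.

Lemma dotv0l n (u : 'cV[R]_n) : dotv 0 u = 0.
Proof. by rewrite dotvC dotv0r. Qed.

Lemma dotv_trmx n p (A : 'M[R]_(p, n)) (u : 'cV[R]_p) (v : 'cV[R]_n) :
  dotv u (A *m v) = dotv (A^T *m u) v.
Proof. by rewrite !dotv_mulmx trmx_mul trmxK mulmxA. Qed.

Lemma dotvv_ge0 n (u : 'cV[R]_n) : 0 <= dotv u u.
Proof. by apply: sumr_ge0 => i _; rewrite -expr2 sqr_ge0. Qed.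

Lemma dotvv_eq0 n (u : 'cV[R]_n) : dotv u u = 0 -> u = 0.
Proof.
move=> uu0; apply/matrixP => i j; rewrite (ord1 j) mxE.
have sq_ge0 (k : 'I_n) : true -> 0 <= u k ord0 * u k ord0 by rewrite -expr2 sqr_ge0.
by have /eqP := psumr_eq0P sq_ge0 uu0 (i := i) isT; rewrite mulf_eq0 orbb => /eqP.
Qed.

Lemma norm2E n (u : 'cV[R]_n) : norm2 u = Num.sqrt (dotv u u).
Proof. by congr Num.sqrt; apply: eq_bigr => i _; rewrite expr2. Qed.

Lemma norm2_ge0 n (u : 'cV[R]_n) : 0 <= norm2 u.
Proof. exact: sqrtr_ge0. Qed.

Lemma norm2_sqr n (u : 'cV[R]_n) : norm2 u ^+ 2 = dotv u u.
Proof. by rewrite norm2E sqr_sqrtr ?dotvv_ge0. Qed.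

Lemma norm2_eq0 n (u : 'cV[R]_n) : norm2 u = 0 -> u = 0.
Proof. by move=> u0; apply: dotvv_eq0; rewrite -norm2_sqr u0 expr0n. Qed.

Lemma norm2_0 n : norm2 (0 : 'cV[R]_n) = 0.
Proof. by rewrite norm2E dotv0r sqrtr0. Qed.

Lemma dotv_sqr_le n (u v : 'cV[R]_n) : dotv u v ^+ 2 <= dotv u u * dotv v v.
Proof.
have [v0|v_neq0] := eqVneq (dotv v v) 0.
  by rewrite (dotvv_eq0 v0) !dotv0r mulr0 expr0n.
have vv_gt0 : 0 < dotv v v by rewrite lt_def v_neq0 dotvv_ge0.
pose t := dotv u v / dotv v v.
have := dotvv_ge0 (u - t *: v).
rewrite !dotvBl !dotvBr !dotvZl !dotvZr (dotvC v u) => expand_ge0.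
have tvv : t * dotv v v = dotv u v by rewrite /t mulfVK.
have uv_ge0 : 0 <= dotv u u - t * dotv u v by nra.
have := mulr_ge0 (dotvv_ge0 v) uv_ge0.
have -> : dotv v v * (dotv u u - t * dotv u v) = dotv u u * dotv v v - dotv u v ^+ 2.
  by rewrite /t; field.
lra.
Qed.

Lemma cauchy_schwarz n (u v : 'cV[R]_n) : `|dotv u v| <= norm2 u * norm2 v.
Proof.
rewrite -ler_sqr ?nnegrE ?mulr_ge0 ?norm2_ge0 //.
by rewrite exprMn !norm2_sqr real_normK ?num_real ?dotv_sqr_le.
Qed.

Lemma dotv_le n (u v : 'cV[R]_n) : dotv u v <= norm2 u * norm2 v.
Proof. exact: le_trans (ler_norm _) (cauchy_schwarz u v). Qed.

Lemma ler_norm2D n (u v : 'cV[R]_n) : norm2 (u + v) <= norm2 u + norm2 v.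
Proof.
rewrite -ler_sqr ?nnegrE ?addr_ge0 ?norm2_ge0 //.
rewrite norm2_sqr dotvDl !dotvDr sqrrD !norm2_sqr (dotvC v u).
have := dotv_le u v; lra.
Qed.

Lemma norm2D_sqr_le n (u v : 'cV[R]_n) :
  norm2 (u + v) ^+ 2 <= 2 * norm2 u ^+ 2 + 2 * norm2 v ^+ 2.
Proof.
rewrite norm2_sqr dotvDl !dotvDr (dotvC v u) -!norm2_sqr.
have := dotv_le u v; have := sqr_ge0 (norm2 u - norm2 v); lra.
Qed.

Lemma norm2Z n a (u : 'cV[R]_n) : norm2 (a *: u) = `|a| * norm2 u.
Proof.
by rewrite !norm2E dotvZl dotvZr mulrA sqrtrM -?expr2 ?sqr_ge0 // sqrtr_sqr.
Qed.

Lemma norm2N n (u : 'cV[R]_n) : norm2 (- u) = norm2 u.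
Proof. by rewrite -scaleN1r norm2Z normrN1 mul1r. Qed.

Lemma norm1_ge0 n (u : 'cV[R]_n) : 0 <= norm1 u.
Proof. exact: sumr_ge0. Qed.

Lemma norm2_le_norm1 n (u : 'cV[R]_n) : norm2 u <= norm1 u.
Proof.
rewrite -ler_sqr ?nnegrE ?norm1_ge0 ?norm2_ge0 // norm2_sqr.
rewrite /norm1 expr2 mulr_suml; apply: ler_sum => i _.
rewrite -expr2 -real_normK ?num_real // expr2 ler_wpM2l // (bigD1 i) //= lerDl.
exact: sumr_ge0.
Qed.

Lemma normr_dotv_mulmx_le n (A : 'M[R]_n) kA (u v : 'cV[R]_n) :
  (forall w, norm2 (A *m w) <= kA * norm2 w) ->
  `|dotv u (A *m v)| <= kA * (norm2 u * norm2 v).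
Proof.
move=> A_bound; apply: le_trans (cauchy_schwarz _ _) _.
by rewrite mulrCA ler_wpM2l ?norm2_ge0.
Qed.

End InnerProduct.

Section Descent.
Variable R : realType.
Local Open Scope classical_set_scope.

Lemma locally_nonincreasing_le (W : R -> R) :
  (forall t, 0 <= t <= 1 -> exists2 del, 0 < del & forall r, 0 <= r <= 1 ->
     `|r - t| < del -> (r <= t -> W t <= W r) /\ (t <= r -> W r <= W t)) ->
  W 1 <= W 0.
Proof.
move=> W_loc.
pose S := [set t : R | 0 <= t <= 1 /\ forall r, 0 <= r <= t -> W r <= W 0].
have S0 : S 0.
  split=> [|r /andP[r0 r_le0]]; first by rewrite lexx ler01.
  by have -> : r = 0 by apply/eqP; rewrite eq_le r0 r_le0.
have supS : has_sup S by split; [exists 0 | exists 1 => t [/andP[_ ->]]].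
set s := sup S.
have s0 : 0 <= s by apply: sup_upper_bound.
have s1 : s <= 1 by apply: ge_sup => [|t [/andP[_ ->]]]; first by exists 0.
have below_s r : 0 <= r -> r < s -> W r <= W 0.
  move=> r0 rs; have sr0 : 0 < s - r by rewrite subr_gt0.
  have [t [_ Wle] rt] := sup_adherent sr0 supS.
  by apply: Wle; rewrite r0 /=; apply/ltW; move: rt; rewrite /s; lra.
have [del del0 Wdel] := W_loc s (introT andP (conj s0 s1)).
have Ws : W s <= W 0.
  have [->|s_neq0] := eqVneq s 0; first by [].
  have m0 : 0 < Num.min s del by rewrite lt_min del0 lt_def s_neq0 s0.
  have ms : Num.min s del <= s by rewrite ge_min lexx.
  have mdel : Num.min s del <= del by rewrite ge_min lexx orbT.
  pose r := s - Num.min s del / 2.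
  have r01 : 0 <= r <= 1 by apply/andP; split; rewrite /r; lra.
  have rs : `|r - s| < del by rewrite /r ler0_norm; lra.
  have [Wr _] := Wdel r r01 rs.
  by apply: le_trans (Wr _) (below_s r _ _); rewrite /r; lra.
suff -> : 1 = s by [].
apply/eqP; rewrite eq_le s1 andbT leNgt; apply/negP => s_lt1.
have m0 : 0 < Num.min (1 - s) del by rewrite lt_min del0 subr_gt0 s_lt1.
have m1 : Num.min (1 - s) del <= 1 - s by rewrite ge_min lexx.
have mdel : Num.min (1 - s) del <= del by rewrite ge_min lexx orbT.
pose s' := s + Num.min (1 - s) del / 2.
have : S s'.
  split=> [|r /andP[r0 rs']]; first by apply/andP; split; rewrite /s'; lra.
  have [rs|sr] := ltP r s; first exact: below_s.
  have r01 : 0 <= r <= 1 by apply/andP; split; rewrite /s' in rs'; lra.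
  have rs : `|r - s| < del by rewrite ger0_norm ?subr_ge0 // /s' in rs' *; lra.
  have [_ Wr] := Wdel r r01 rs.
  exact: le_trans (Wr sr) Ws.
by move=> /sup_upper_bound-/(_ supS); rewrite -/s /s'; lra.
Qed.

Definition has_deriv1 (phi : R -> R) (D t : R) : Prop :=
  forall e, 0 < e -> exists2 del, 0 < del & forall r,
    `|r - t| < del -> `|phi r - phi t - D * (r - t)| <= e * `|r - t|.

Lemma nonpos_deriv1_le (phi : R -> R) :
  (forall t, 0 <= t <= 1 -> exists2 D, D <= 0 & has_deriv1 phi D t) ->
  phi 1 <= phi 0.
Proof.
move=> dphi; apply/ler_addgt0Pr => e e0.
suff : phi 1 - e * 1 <= phi 0 - e * 0 by lra.
apply: (locally_nonincreasing_le (W := fun t => phi t - e * t)) => t t01.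
have [D D_le0 /(_ e e0)[del del0 hdel]] := dphi t t01.
exists del => // r _ /hdel; rewrite ler_norml => /andP[lo hi].
split=> [rt|tr].
- rewrite ler0_norm ?subr_le0 // in lo; nra.
- rewrite ger0_norm ?subr_ge0 // in hi; nra.
Qed.

Lemma has_deriv1D (phi psi : R -> R) (D E t : R) :
  has_deriv1 phi D t -> has_deriv1 psi E t ->
  has_deriv1 (fun r => phi r + psi r) (D + E) t.
Proof.
move=> dphi dpsi e e0; have e20 : 0 < e / 2 by rewrite divr_gt0.
have [del1 del10 h1] := dphi _ e20; have [del2 del20 h2] := dpsi _ e20.
exists (Num.min del1 del2) => [|r]; first by rewrite lt_min del10.
rewrite lt_min => /andP[/h1 le1 /h2 le2].
have := ler_normD (phi r - phi t - D * (r - t)) (psi r - psi t - E * (r - t)).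
have -> : phi r + psi r - (phi t + psi t) - (D + E) * (r - t) =
  (phi r - phi t - D * (r - t)) + (psi r - psi t - E * (r - t)) by ring.
lra.
Qed.

Lemma has_deriv1_quadratic (a b t : R) :
  has_deriv1 (fun r => a * r + b * r ^+ 2) (a + 2 * b * t) t.
Proof.
move=> e e0; exists (e / (`|b| + 1)) => [|r]; first by rewrite divr_gt0 // ltr_wpDl.
rewrite ltr_pdivlMr ?ltr_wpDl // => rt.
have -> : a * r + b * r ^+ 2 - (a * t + b * t ^+ 2) - (a + 2 * b * t) * (r - t) =
  b * (r - t) * (r - t) by ring.
rewrite !normrM ler_wpM2r //; have := normr_ge0 (r - t); nra.
Qed.

Lemma has_deriv1_segment n (F : 'cV[R]_n -> R) (G x d : 'cV[R]_n) (t : R) :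
  has_gradient F G (x + t *: d) ->
  has_deriv1 (fun r => F (x + r *: d)) (dotv G d) t.
Proof.
move=> gradF e e0.
have nd1 : 0 < norm2 d + 1 by rewrite ltr_wpDl ?norm2_ge0.
have [del del0 hdel] := gradF _ (divr_gt0 e0 nd1).
exists (del / (norm2 d + 1)) => [|r rt]; first by rewrite divr_gt0.
have step : x + r *: d - (x + t *: d) = (r - t) *: d.
  by rewrite opprD addrACA subrr add0r scalerBl.
have small : norm2 ((r - t) *: d) < del.
  rewrite norm2Z; rewrite ltr_pdivlMr // in rt.
  have := norm2_ge0 d; have := normr_ge0 (r - t); nra.
move: (hdel (x + r *: d)); rewrite step => /(_ small).
rewrite dotvZr norm2Z (mulrC (dotv _ _)) => /le_trans; apply.
have -> : e / (norm2 d + 1) * (`|r - t| * norm2 d) =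
    e * `|r - t| * (norm2 d / (norm2 d + 1)) by field; rewrite gt_eqF.
by rewrite ler_piMr ?mulr_ge0 ?(ltW e0) // ler_pdivrMr // mul1r lerDl.
Qed.

Lemma descent_upper n (X : 'cV[R]_n -> Prop) (F : 'cV[R]_n -> R)
    (G : 'cV[R]_n -> 'cV[R]_n) (L : R) :
  convex_set X -> (forall x, X x -> has_gradient F (G x) x) -> 0 <= L ->
  (forall x z, X x -> X z -> norm2 (G x - G z) <= L * norm2 (x - z)) ->
  forall x z, X x -> X z ->
  F z - F x - dotv (G x) (z - x) <= L / 2 * norm2 (z - x) ^+ 2.
Proof.
move=> convX gradF L0 lipG x z Xx Xz.
set d := z - x; set gd := dotv (G x) d; set b := - (L / 2 * norm2 d ^+ 2).
(* phi' t = <G (x + t d) - G x, d> - L t |d|^2, which is <= 0 by Lipschitz *)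
pose phi r := F (x + r *: d) + (- gd * r + b * r ^+ 2).
suff : phi 1 <= phi 0.
  have xdz : x + d = z by rewrite /d addrC subrK.
  by rewrite /phi scale0r addr0 scale1r xdz /b; lra.
apply: nonpos_deriv1_le => t /andP[t0 t1].
have Xp : X (x + t *: d).
  have -> : x + t *: d = t *: z + (1 - t) *: x.
    by apply/matrixP => i j; rewrite /d !mxE; ring.
  by apply: convX => //; rewrite t0 t1.
exists (dotv (G (x + t *: d)) d + (- gd + 2 * b * t)); last first.
  exact: has_deriv1D (has_deriv1_segment (gradF _ Xp)) (has_deriv1_quadratic _ _ _).
have := dotv_le (G (x + t *: d) - G x) d; rewrite dotvBl.
have := lipG _ _ Xp Xx; rewrite addrAC subrr add0r norm2Z ger0_norm //.
have := norm2_ge0 d; have := norm2_ge0 (G (x + t *: d) - G x).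
rewrite /b /gd; nra.
Qed.

Lemma descent_lemma n (X : 'cV[R]_n -> Prop) (F : 'cV[R]_n -> R)
    (G : 'cV[R]_n -> 'cV[R]_n) (L : R) :
  convex_set X -> (forall x, X x -> has_gradient F (G x) x) -> 0 <= L ->
  (forall x z, X x -> X z -> norm2 (G x - G z) <= L * norm2 (x - z)) ->
  forall x z, X x -> X z ->
  `|F z - F x - dotv (G x) (z - x)| <= L / 2 * norm2 (z - x) ^+ 2.
Proof.
move=> convX gradF L0 lipG x z Xx Xz.
have gradNF x' : X x' -> has_gradient (fun w => - F w) (- G x') x'.
  move=> Xx' e /(gradF _ Xx')[del del0 hdel]; exists del => // w /hdel.
  by rewrite dotvNl -normrN !opprD !opprK.
have lipNG x' z' : X x' -> X z' -> norm2 (- G x' - - G z') <= L * norm2 (x' - z').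
  by move=> Xx' Xz'; rewrite -opprD norm2N; apply: lipG.
have := descent_upper convX gradNF L0 lipNG Xx Xz; rewrite dotvNl.
have := descent_upper convX gradF L0 lipG Xx Xz.
rewrite ler_norml; lra.
Qed.

Lemma lipschitz_const_ge0 n p (X : 'cV[R]_n -> Prop)
    (G : 'cV[R]_n -> 'cV[R]_p) :
  (exists L, forall z w, X z -> X w -> norm2 (G z - G w) <= L * norm2 (z - w)) ->
  exists2 L, 0 <= L &
    forall z w, X z -> X w -> norm2 (G z - G w) <= L * norm2 (z - w).
Proof.
case=> L lipG; exists (Num.max L 0) => [|z w Xz Xw].
  by rewrite le_max lexx orbT.
apply: le_trans (lipG _ _ Xz Xw) _.
have L_le : L <= Num.max L 0 by rewrite le_max lexx.
by have := ler_wpM2r (norm2_ge0 (z - w)) L_le.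
Qed.

Lemma descent_model n (X : 'cV[R]_n -> Prop) (F : 'cV[R]_n -> R)
    (G : 'cV[R]_n -> 'cV[R]_n) (L La : R) (x d : 'cV[R]_n) (a : R) :
  convex_set X -> (forall z, X z -> has_gradient F (G z) z) -> 0 <= L -> L <= La ->
  (forall z w, X z -> X w -> norm2 (G z - G w) <= L * norm2 (z - w)) ->
  X x -> X (x + a *: d) ->
  `|F (x + a *: d) - F x - a * dotv (G x) d| <= 2^-1 * La * a ^+ 2 * norm2 d ^+ 2.
Proof.
move=> convX gradF L0 L_le lipG Xx Xxd.
have := descent_lemma convX gradF L0 lipG Xx Xxd.
have -> : x + a *: d - x = a *: d by rewrite addrC addKr.
rewrite dotvZr norm2Z exprMn real_normK ?num_real // => /le_trans; apply.
have ad0 : 0 <= a ^+ 2 * norm2 d ^+ 2 by rewrite mulr_ge0 ?sqr_ge0.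
have := ler_wpM2r ad0 L_le; lra.
Qed.

End Descent.

Section Subproblem.
Variable R : realType.

Lemma mulmx_tr_unitmx m n (A : 'M[R]_(m, n)) (s : R) : 0 < s ->
  (forall v : 'cV[R]_m, s * norm2 v <= norm2 (A^T *m v)) -> A *m A^T \in unitmx.
Proof.
move=> s0 A_sv; rewrite -row_free_unit -kermx_eq0; apply/eqP/row_matrixP => i.
rewrite row0; set w := row i _.
have /(congr1 trmx) : w *m (A *m A^T) = 0 by rewrite /w -row_mul mulmx_ker row0.
rewrite trmx0 !trmx_mul trmxK => AAw0.
have /dotvv_eq0 Aw0 : dotv (A^T *m w^T) (A^T *m w^T) = 0.
  by rewrite -dotv_trmx mulmxA AAw0 dotv0r.
have := A_sv w^T; rewrite Aw0 norm2_0 pmulr_rle0 // => w_le0.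
have /norm2_eq0/(congr1 trmx) : norm2 w^T = 0.
  by apply/eqP; rewrite eq_le w_le0 norm2_ge0.
by rewrite trmxK trmx0.
Qed.

Lemma null_range_decomposition m n (A : 'M[R]_(m, n)) (d : 'cV[R]_n)
    (b : 'cV[R]_m) (s : R) :
  0 < s -> min_sv_ge A s -> A *m d = b ->
  exists u v, [/\ d = u + v, A *m u = 0 & s * norm2 v <= norm2 b].
Proof.
move=> s0 [sv_wide sv_tall] Adb; case: (leqP m n) => [mn|nm].
- pose w := invmx (A *m A^T) *m b; pose v := A^T *m w.
  have unitAA := mulmx_tr_unitmx s0 (sv_wide mn).
  have Av : A *m v = b by rewrite /v mulmxA mulKVmx.
  exists (d - v), v; split; first by rewrite subrK.
    by rewrite mulmxBr Adb Av subrr.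
  have vv : norm2 v ^+ 2 <= norm2 w * norm2 b.
    by rewrite norm2_sqr {2}/v -dotv_trmx Av dotv_le.
  have [->|v_neq0] := eqVneq (norm2 v) 0; first by rewrite mulr0 norm2_ge0.
  have v_gt0 : 0 < norm2 v by rewrite lt_def v_neq0 norm2_ge0.
  rewrite -(ler_pM2r v_gt0); have := sv_wide mn w; rewrite -/v.
  have := norm2_ge0 b; nra.
- exists 0, d; rewrite add0r mulmx0 -Adb; split=> //.
  exact: sv_tall (ltnW nm) d.
Qed.

Section KKTStep.
Variables (m n : nat) (Hk : 'M[R]_n) (Jk : 'M[R]_(m, n)) (g d : 'cV[R]_n).
Variables (y : 'cV[R]_m) (kH ze : R).
Hypothesis H_bound : forall w, norm2 (Hk *m w) <= kH * norm2 w.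
Hypothesis H_null_curv :
  forall u, Jk *m u = 0 -> ze * norm2 u ^+ 2 <= dotv u (Hk *m u).
Hypothesis kkt : Hk *m d + Jk^T *m y = - g.
Variables u v : 'cV[R]_n.
Hypothesis d_split : d = u + v.
Hypothesis Ju0 : Jk *m u = 0.

Lemma null_dotv_Hd : dotv u (Hk *m d) = - dotv u g.
Proof.
have -> : Hk *m d = - g - Jk^T *m y by rewrite -kkt addrK.
by rewrite dotvBr dotvNr dotv_trmx trmxK Ju0 dotv0l subr0.
Qed.

Lemma null_component_bound : ze * norm2 u <= norm2 g + kH * norm2 v.
Proof.
have uHu : dotv u (Hk *m u) = - dotv u g - dotv u (Hk *m v).
  by rewrite -null_dotv_Hd d_split mulmxDr dotvDr addrK.
have Hv_ge0 : 0 <= kH * norm2 v := le_trans (norm2_ge0 _) (H_bound v).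
have [->|u_neq0] := eqVneq (norm2 u) 0.
  by rewrite mulr0 addr_ge0 ?norm2_ge0.
have u_gt0 : 0 < norm2 u by rewrite lt_def u_neq0 norm2_ge0.
rewrite -(ler_pM2l u_gt0).
have := H_null_curv Ju0; rewrite uHu.
have := lerNnormlW (cauchy_schwarz u g).
have := lerNnormlW (normr_dotv_mulmx_le u v H_bound).
lra.
Qed.

Lemma dHd_split :
  dotv d (Hk *m d) = dotv u (Hk *m u) + dotv u (Hk *m v) + dotv v (Hk *m d).
Proof. by rewrite {1}d_split dotvDl {1}d_split mulmxDr dotvDr. Qed.

Lemma model_term_bound : 0 <= ze ->
  dotv g d + Num.max (dotv d (Hk *m d)) 0 <=
  norm2 v * (norm2 g + kH * (norm2 u + norm2 v)).
Proof.
move=> ze_ge0.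
have gd : dotv g d = - dotv u (Hk *m u) - dotv u (Hk *m v) + dotv g v.
  have gu : dotv g u = - dotv u (Hk *m d) by rewrite dotvC null_dotv_Hd opprK.
  by rewrite {1}d_split dotvDr gu d_split mulmxDr dotvDr opprD.
have uHu_ge0 : 0 <= dotv u (Hk *m u).
  by apply: le_trans (H_null_curv Ju0); rewrite mulr_ge0 ?sqr_ge0.
have Hv_ge0 : 0 <= kH * norm2 v := le_trans (norm2_ge0 _) (H_bound v).
have := ler_wpM2l Hv_ge0 (ler_norm2D u v); rewrite -d_split.
have := mulr_ge0 Hv_ge0 (norm2_ge0 v).
have := ler_normlW (normr_dotv_mulmx_le v d H_bound).
have := lerNnormlW (normr_dotv_mulmx_le u v H_bound).
have := ler_normlW (cauchy_schwarz g v).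
rewrite gd dHd_split /Num.max; case: ifP; lra.
Qed.

Lemma null_component_sqr_bound :
  ze * norm2 u ^+ 2 <=
  Num.max (dotv d (Hk *m d)) 0 + kH * (2 * norm2 u + norm2 v) * norm2 v.
Proof.
have vHd : dotv v (Hk *m d) = dotv v (Hk *m u) + dotv v (Hk *m v).
  by rewrite d_split mulmxDr dotvDr.
have : dotv d (Hk *m d) <= Num.max (dotv d (Hk *m d)) 0 by rewrite le_max lexx.
have := H_null_curv Ju0; rewrite dHd_split vHd.
have := lerNnormlW (normr_dotv_mulmx_le u v H_bound).
have := lerNnormlW (normr_dotv_mulmx_le v u H_bound).
have := lerNnormlW (normr_dotv_mulmx_le v v H_bound).
lra.
Qed.

End KKTStep.

Lemma subproblem_bounds m n (s kH ze Bg Bc : R) :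
  0 < s -> 0 <= kH -> 0 < ze -> 0 <= Bg -> 0 <= Bc ->
  exists2 K, 0 < K & exists2 C, 0 <= C &
  forall (Hk : 'M[R]_n) (Jk : 'M[R]_(m, n)) (g d : 'cV[R]_n) (cc y : 'cV[R]_m),
    min_sv_ge Jk s -> (forall w, norm2 (Hk *m w) <= kH * norm2 w) ->
    (forall u, Jk *m u = 0 -> ze * norm2 u ^+ 2 <= dotv u (Hk *m u)) ->
    Hk *m d + Jk^T *m y = - g -> Jk *m d = - cc ->
    norm2 g <= Bg -> norm2 cc <= Bc ->
    dotv g d + Num.max (dotv d (Hk *m d)) 0 <= K * norm1 cc /\
    norm2 d ^+ 2 <= 2 / ze * Num.max (dotv d (Hk *m d)) 0 + C * norm1 cc.
Proof.
move=> s0 kH0 ze0 Bg0 Bc0.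
(* V bounds the range component of the step and U its null-space component *)
pose V := Bc / s; pose U := (Bg + kH * V) / ze.
have V0 : 0 <= V by rewrite /V divr_ge0 ?(ltW s0).
have U0 : 0 <= U by apply: divr_ge0 (ltW ze0); apply: addr_ge0 (mulr_ge0 _ _).
have C0 : 0 <= 2 * kH * (2 * U + V) / ze + 2 * V.
  have ze_inv : 0 <= ze^-1 by rewrite invr_ge0 ltW.
  have := mulr_ge0 (mulr_ge0 kH0 (addr_ge0 (addr_ge0 U0 U0) V0)) ze_inv; lra.
have kHUV0 : 0 <= kH * (U + V) by rewrite mulr_ge0 ?addr_ge0.
exists ((Bg + kH * (U + V) + 1) / s); first by rewrite divr_gt0 //; lra.
exists ((2 * kH * (2 * U + V) / ze + 2 * V) / s); first by rewrite divr_ge0 ?(ltW s0).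
move=> Hk Jk g d cc y sv Hb Hcurv kkt Jd gB cB.
have [u [v [d_split Ju0 sv_v]]] := null_range_decomposition s0 sv Jd.
rewrite norm2N in sv_v.
have v_cc : norm2 v <= norm1 cc / s.
  by rewrite ler_pdivlMr // mulrC (le_trans sv_v) ?norm2_le_norm1.
have vV : norm2 v <= V by rewrite ler_pdivlMr // mulrC (le_trans sv_v).
have uU : norm2 u <= U.
  have := null_component_bound Hb Hcurv kkt d_split Ju0.
  rewrite ler_pdivlMr // mulrC => /le_trans; apply.
  exact: lerD gB (ler_wpM2l kH0 vV).
have nu0 := norm2_ge0 u; have nv0 := norm2_ge0 v; have ng0 := norm2_ge0 g.
split.
- apply: le_trans (model_term_bound Hb Hcurv kkt d_split Ju0 (ltW ze0)) _.
  have : norm2 g + kH * (norm2 u + norm2 v) <= Bg + kH * (U + V).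
    exact: lerD gB (ler_wpM2l kH0 (lerD uU vV)).
  have := norm1_ge0 cc; rewrite mulrAC; nra.
- set M := Num.max _ 0; set W := 2 * kH * (2 * U + V) / ze + 2 * V.
  have uM : ze * norm2 u ^+ 2 <= M + kH * (2 * U + V) * norm2 v.
    apply: le_trans (null_component_sqr_bound Hb Hcurv d_split Ju0) _.
    rewrite lerD2l ler_wpM2r // ler_wpM2l //.
    exact: lerD (ler_wpM2l _ uU) vV.
  have vv : norm2 v ^+ 2 <= V * norm2 v by rewrite expr2 ler_wpM2r.
  have -> : W / s * norm1 cc = W * (norm1 cc / s) by rewrite mulrAC mulrA.
  rewrite d_split; apply: le_trans (norm2D_sqr_le u v) _.
  apply: le_trans _ (lerD (lexx _) (ler_wpM2l C0 v_cc)).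
  have -> : 2 / ze * M + W * norm2 v =
    2 * ((M + kH * (2 * U + V) * norm2 v) / ze) + 2 * (V * norm2 v).
    by rewrite /W; field; rewrite gt_eqF.
  by rewrite lerD ?ler_wpM2l // ler_pdivlMr // mulrC.
Qed.

End Subproblem.

Section LineSearch.
Variable R : realType.

Lemma tau_next_bounds n (eps sig taup K n1 : R) (g : 'cV[R]_n) (Hk : 'M[R]_n)
    (d : 'cV[R]_n) :
  0 < taup -> 0 < eps < 1 -> 0 < sig < 1 -> 0 < K -> 0 <= n1 ->
  dotv g d + Num.max (dotv d (Hk *m d)) 0 <= K * n1 ->
  let t := tau_next eps sig taup g Hk d n1 in
  [/\ 0 < t, t <= taup, Num.min taup ((1 - eps) * ((1 - sig) / K)) <= t &
      t * (dotv g d + Num.max (dotv d (Hk *m d)) 0) <= (1 - sig) * n1].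
Proof.
move=> taup0 /andP[eps0 eps1] /andP[sig0 sig1] K0 n10.
rewrite /tau_next /=; set den := dotv g d + _ => den_le.
have sig_n1 : 0 <= (1 - sig) * n1 by rewrite mulr_ge0 //; lra.
case: ifP => [den_le0|/negbT].
  split => //; first by rewrite ge_min lexx.
  by apply: le_trans sig_n1; rewrite pmulr_rle0.
rewrite -ltNge => den0; have n1_gt0 : 0 < n1 by nra.
set tr := (1 - sig) * n1 / den.
have trden : tr * den = (1 - sig) * n1 by rewrite /tr mulfVK ?gt_eqF.
have tr_ge : (1 - sig) / K <= tr.
  rewrite /tr ler_pdivlMr //; apply: le_trans (ler_wpM2l _ den_le) _.
    by rewrite divr_ge0 ?ltW //; lra.
  by rewrite mulrA divfK ?gt_eqF.
have tr0 : 0 < tr by apply: lt_le_trans tr_ge; rewrite divr_gt0 //; lra.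
case: ifP => [taup_le|/negbT].
  by split => //; rewrite ?ge_min ?lexx // -trden ler_pM2r.
rewrite -ltNge => tr_lt; split.
- by rewrite mulr_gt0 //; lra.
- nra.
- by rewrite ge_min ler_pM2l ?tr_ge ?orbT //; lra.
- by rewrite -mulrA trden; nra.
Qed.

Lemma model_reduction_lower_bounds n m (c : 'cV[R]_n -> 'cV[R]_m)
    (x g d : 'cV[R]_n) (Hk : 'M[R]_n) (tau tmin sig ze C : R) :
  0 < tmin -> tmin <= tau -> 0 < ze -> 0 < sig -> 0 <= C ->
  tau * (dotv g d + Num.max (dotv d (Hk *m d)) 0) <= (1 - sig) * norm1 (c x) ->
  norm2 d ^+ 2 <= 2 / ze * Num.max (dotv d (Hk *m d)) 0 + C * norm1 (c x) ->
  sig * norm1 (c x) <= dq c x tau g Hk d /\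
  Num.min (tmin * ze / 4) (sig / (C + 1)) * norm2 d ^+ 2 <= dq c x tau g Hk d.
Proof.
move=> tmin0 tmin_le ze0 sig0 C0; rewrite /dq.
have n10 := norm1_ge0 (c x); have M0 : 0 <= Num.max (dotv d (Hk *m d)) 0.
  by rewrite le_max lexx orbT.
move: (dotv g d) (Num.max _ 0) (norm1 (c x)) (norm2 d ^+ 2) M0 n10.
move=> gd M n1 nd2 M0 n10 tau_den nd2_le.
(* dq = - tau (gd + M) + tau M / 2 + n1 *)
have dq_ge : sig * n1 + 2^-1 * tmin * M <= - tau * (gd + 2^-1 * M) + n1.
  by have := ler_wpM2r M0 tmin_le; lra.
have tM0 : 0 <= 2^-1 * tmin * M.
  by apply: (mulr_ge0 _ M0); apply: (mulr_ge0 _ (ltW tmin0)); rewrite invr_ge0.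
split; first by lra.
apply: le_trans dq_ge; set kq := Num.min _ _.
have kq0 : 0 <= kq.
  rewrite le_min !divr_ge0 ?(ltW sig0) ?mulr_ge0 ?(ltW tmin0) ?(ltW ze0) //.
  by rewrite addr_ge0.
have kM : kq * (2 / ze * M) <= 2^-1 * tmin * M.
  have -> : 2^-1 * tmin * M = tmin * ze / 4 * (2 / ze * M) by field; rewrite gt_eqF.
  rewrite ler_wpM2r ?ge_min ?lexx //.
  by apply: (mulr_ge0 _ M0); rewrite divr_ge0 ?(ltW ze0).
have kC : kq * (C * n1) <= sig * n1.
  apply: le_trans (_ : sig / (C + 1) * (C * n1) <= _).
    by rewrite ler_wpM2r ?mulr_ge0 // ge_min lexx orbT.
  have C1 : 0 < C + 1 by lra.
  have -> : sig / (C + 1) * (C * n1) = sig * n1 * (C / (C + 1)).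
    by field; rewrite gt_eqF.
  by rewrite ler_piMr ?mulr_ge0 ?(ltW sig0) // ler_pdivrMr // mul1r lerDl.
by have := ler_wpM2l kq0 nd2_le; lra.
Qed.

Lemma dotv_gradc m n (J : 'cV[R]_n -> 'M[R]_(m, n)) x i (d : 'cV[R]_n) :
  dotv (gradc J x i) d = (J x *m d) i ord0.
Proof. by rewrite /gradc /dotv mxE; apply: eq_bigr => j _; rewrite !mxE. Qed.

Lemma merit_model_bound n m (f : 'cV[R]_n -> R) (c : 'cV[R]_n -> 'cV[R]_m)
    (Jx : 'M[R]_(m, n)) (x d g : 'cV[R]_n) (a tau La : R) (ga : 'I_m -> R) :
  Jx *m d = - c x -> 0 <= tau ->
  f (x + a *: d) <= f x + a * dotv g d + 2^-1 * La * a ^+ 2 * norm2 d ^+ 2 ->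
  (forall i, `|c (x + a *: d) i ord0| <=
     `|c x i ord0 + a * (Jx *m d) i ord0| + 2^-1 * ga i * a ^+ 2 * norm2 d ^+ 2) ->
  merit f c (x + a *: d) tau <=
  tau * f x + a * tau * dotv g d + `|1 - a| * norm1 (c x)
  + 2^-1 * (tau * La + \sum_i ga i) * a ^+ 2 * norm2 d ^+ 2.
Proof.
move=> Jd tau0 f_model c_model; rewrite /merit.
have c_sum : norm1 (c (x + a *: d)) <=
    `|1 - a| * norm1 (c x) + 2^-1 * (\sum_i ga i) * a ^+ 2 * norm2 d ^+ 2.
  rewrite /norm1 !mulr_sumr !mulr_suml -big_split /=; apply: ler_sum => i _.
  apply: le_trans (c_model i) _; rewrite Jd mxE.
  have -> : c x i ord0 + a * - c x i ord0 = (1 - a) * c x i ord0 by ring.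
  by rewrite normrM.
have := ler_wpM2l tau0 f_model; lra.
Qed.

Lemma sufficient_decrease_of_model (tau fx gd M n1 dqv eta a Lam nd2 : R) :
  dqv = - tau * (gd + 2^-1 * M) + n1 -> 0 <= M -> 0 < tau -> 0 < eta < 1 ->
  0 <= n1 -> 0 < a ->
  (a <= 1 /\ Lam * a * nd2 <= 2 * (1 - eta) * dqv) \/
  (1 < a /\ Lam * a * nd2 = 2 * (1 - eta) * dqv - 4 * n1) ->
  tau * fx + a * tau * gd + `|1 - a| * n1 + 2^-1 * Lam * a ^+ 2 * nd2 <=
  tau * fx + n1 - eta * a * dqv.
Proof.
move=> -> M0 tau0 /andP[eta0 eta1] n10 a0 step.
have aM : 0 <= a * tau * M := mulr_ge0 (mulr_ge0 (ltW a0) (ltW tau0)) M0.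
have -> : 2^-1 * Lam * a ^+ 2 * nd2 = a / 2 * (Lam * a * nd2) by ring.
case: step => [[a1 model]|[a1 ->]].
- rewrite ger0_norm ?subr_ge0 //.
  have a2 : 0 <= a / 2 by rewrite divr_ge0 ?ltW.
  have := ler_wpM2l a2 model; nra.
- rewrite ler0_norm ?subr_le0 ?(ltW a1) //; nra.
Qed.

Lemma alg1_step_spec (eta Lam dqv n1 nd2 kq Lmax : R) :
  0 < eta < 1 -> 0 < Lam -> Lam <= Lmax -> 0 < nd2 -> 0 < kq -> kq * nd2 <= dqv ->
  0 <= n1 ->
  let a := alg1_step eta Lam dqv n1 nd2 in
  [/\ 0 < a, Num.min 1 (2 * (1 - eta) * kq / Lmax) <= a &
   (a <= 1 /\ Lam * a * nd2 <= 2 * (1 - eta) * dqv) \/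
   (1 < a /\ Lam * a * nd2 = 2 * (1 - eta) * dqv - 4 * n1)].
Proof.
move=> /andP[eta0 eta1] Lam0 Lam_le nd20 kq0 dq_ge n10; rewrite /alg1_step /=.
have Lnd0 : 0 < Lam * nd2 by rewrite mulr_gt0.
set ah := 2 * (1 - eta) * dqv / (Lam * nd2).
have ahE : Lam * ah * nd2 = 2 * (1 - eta) * dqv.
  by rewrite /ah; field; rewrite !gt_eqF.
have A0 : 0 <= 2 * (1 - eta) * kq by rewrite !mulr_ge0 ?ltW //; lra.
have ah_ge : 2 * (1 - eta) * kq / Lmax <= ah.
  apply: le_trans (_ : 2 * (1 - eta) * kq / Lam <= _).
    by rewrite ler_wpM2l // lef_pV2 ?posrE ?(lt_le_trans Lam0).
  have -> : 2 * (1 - eta) * kq / Lam = 2 * (1 - eta) * (kq * nd2) / (Lam * nd2).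
    by field; rewrite !gt_eqF.
  rewrite /ah; apply: ler_wpM2r; first by rewrite invr_ge0 ltW.
  by apply: ler_wpM2l dq_ge; lra.
have ah0 : 0 < ah.
  have dq0 : 0 < dqv by apply: lt_le_trans dq_ge; rewrite mulr_gt0.
  by apply: divr_gt0 Lnd0; apply: mulr_gt0 dq0; lra.
case: ifP => [ah_lt1|/negbT]; first split => //.
- by rewrite ge_min ah_ge orbT.
- by left; rewrite ahE ltW.
rewrite -leNgt => ah_ge1.
case: ifP => [at_le1|/negbT].
  split; [exact: ltr01 | by rewrite ge_min lexx | left; split => //].
  by rewrite -ahE ler_wpM2r ?(ltW nd20) // ler_wpM2l ?(ltW Lam0).
rewrite -ltNge => at_gt1; split; first lra.
  by rewrite ge_min (ltW at_gt1).
right; split => //.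
by rewrite /ah; field; rewrite !gt_eqF.
Qed.

Lemma backtrack_estimate_bounded (rho L Lc Lnext Lbar : R) (P : Prop) :
  0 < rho -> (L <= Lc -> P) -> (P -> Lnext = Lc) -> (~ P -> Lnext = rho * Lc) ->
  0 < Lc <= Lbar -> rho * L <= Lbar -> 0 < Lnext <= Lbar.
Proof.
move=> rho0 P_of_ge keep grow /andP[Lc0 Lc_le] rhoL_le.
have [/keep -> | /[dup] /grow -> notP] := pselect P; first by rewrite Lc0.
have Lc_lt : Lc < L by rewrite ltNge; apply/negP => /P_of_ge.
rewrite mulr_gt0 //=; apply: le_trans rhoL_le.
by rewrite ler_pM2l // ltW.
Qed.

End LineSearch.

Section Sequences.
Variable R : realType.

Lemma telescoping_lim0 (psi q : nat -> R) (c : R) : 0 < c ->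
  (forall k, 0 <= psi k) -> (forall k, 0 <= q k) ->
  (forall k, psi k.+1 <= psi k - c * q k) -> lim0 q.
Proof.
move=> c0 psi0 q0 psi_dec e e0.
have psi_mono k j : (k <= j)%N -> psi j <= psi k.
  move=> /subnK <-; elim: (j - k)%N => [|i IH] //=.
  rewrite addSn; apply: le_trans (psi_dec _) _.
  by have := mulr_ge0 (ltW c0) (q0 (i + k)%N); lra.
(* - psi is nondecreasing and bounded by 0: take k0 with - psi k0 within
   c e of the supremum *)
pose E := [set z : R | exists k, z = - psi k]%classic.
have supE : has_sup E.
  by split; [exists (- psi 0%N), 0%N | exists 0 => _ [k ->]; rewrite oppr_le0].
have [_ [k0 ->] sup_lt] := sup_adherent (mulr_gt0 c0 e0) supE.
exists k0 => k k0k; rewrite ger0_norm // -(ltr_pM2l c0).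
have : - psi k.+1 <= sup E by apply: sup_upper_bound => //; exists k.+1.
by have := psi_mono _ _ k0k; have := psi_dec k; lra.
Qed.

Lemma lim0_le_scale (u v : nat -> R) (C : R) :
  0 <= C -> (forall k, `|u k| <= C * v k) -> lim0 v -> lim0 u.
Proof.
move=> C0 uv v0 e e0; have C1 : 0 < C + 1 by lra.
have [N vN] := v0 _ (divr_gt0 e0 C1); exists N => k /vN vk.
apply: le_lt_trans (uv k) _; apply: le_lt_trans (ler_wpM2l C0 (ler_norm _)) _.
apply: le_lt_trans (ler_wpM2l C0 (ltW vk)) _.
by rewrite mulrCA gtr_pMr // ltr_pdivrMr // mul1r ltrDl.
Qed.

Lemma lim0_sqr (u : nat -> R) : lim0 (fun k => u k ^+ 2) -> lim0 u.
Proof.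
move=> u2 e e0; have [N uN] := u2 _ (exprn_gt0 2 e0); exists N => k /uN.
by rewrite normrX ltr_sqr ?nnegrE ?(ltW e0).
Qed.

End Sequences.

Section Convergence.
Variables (R : realType) (n m : nat) (X : 'cV[R]_n -> Prop) (f : 'cV[R]_n -> R).
Variables (gf : 'cV[R]_n -> 'cV[R]_n) (c : 'cV[R]_n -> 'cV[R]_m).
Variables (J : 'cV[R]_n -> 'M[R]_(m, n)) (H : nat -> 'M[R]_n).
Variables (x d : nat -> 'cV[R]_n) (y : nat -> 'cV[R]_m) (tau alpha : nat -> R).
Variables (tau0 eps sig eta L flow K C ze : R) (gam : 'I_m -> R).

Hypothesis convX : convex_set X.
Hypothesis grad_f : forall z, X z -> has_gradient f (gf z) z.
Hypothesis grad_c :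
  forall z, X z -> forall i, has_gradient (fun w => c w i ord0) (gradc J z i) z.
Hypothesis L_ge0 : 0 <= L.
Hypothesis lip_gf :
  forall z w, X z -> X w -> norm2 (gf z - gf w) <= L * norm2 (z - w).
Hypothesis gam_ge0 : forall i, 0 <= gam i.
Hypothesis lip_gc : forall i z w, X z -> X w ->
  norm2 (gradc J z i - gradc J w i) <= gam i * norm2 (z - w).
Hypothesis f_ge : forall z, X z -> flow <= f z.
Hypothesis Xx : forall k, X (x k).
Hypothesis iter : common_iteration gf c J H x d y tau alpha tau0 eps sig.
Hypothesis nonterm : no_finite_termination gf c J x y.
Hypotheses (tau0_gt0 : 0 < tau0) (eps01 : 0 < eps < 1) (sig01 : 0 < sig < 1).
Hypothesis eta01 : 0 < eta < 1.
Hypotheses (K_gt0 : 0 < K) (C_ge0 : 0 <= C) (ze_gt0 : 0 < ze).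
Hypothesis model_term_le : forall k,
  dotv (gf (x k)) (d k) + Num.max (dotv (d k) (H k *m d k)) 0 <= K * norm1 (c (x k)).
Hypothesis step_sqr_le : forall k, norm2 (d k) ^+ 2 <=
  2 / ze * Num.max (dotv (d k) (H k *m d k)) 0 + C * norm1 (c (x k)).

Let tmin := Num.min tau0 ((1 - eps) * ((1 - sig) / K)).
Let kq := Num.min (tmin * ze / 4) (sig / (C + 1)).
Let dqk k := dq c (x k) (tau k) (gf (x k)) (H k) (d k).

Lemma tau_bounds k :
  [/\ 0 < tau k, tau k <= tau0, tmin <= tau k &
      tau k * (dotv (gf (x k)) (d k) + Num.max (dotv (d k) (H k *m d k)) 0)
        <= (1 - sig) * norm1 (c (x k))].
Proof.
elim: k => [|k [tau_gt0 tau_le tmin_le _]].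
  have [_ [_ [-> _]]] := iter 0.
  have [t0 t_le t_ge t_den] :=
    tau_next_bounds tau0_gt0 eps01 sig01 K_gt0 (norm1_ge0 _) (model_term_le 0).
  by split.
have [_ [_ [-> _]]] := iter k.+1.
have [t0 t_le t_ge t_den] :=
  tau_next_bounds tau_gt0 eps01 sig01 K_gt0 (norm1_ge0 _) (model_term_le k.+1).
split=> //; first exact: le_trans t_le tau_le.
by apply: le_trans t_ge; rewrite le_min tmin_le ge_min lexx orbT.
Qed.

Lemma tau_nonincreasing k : tau k.+1 <= tau k.
Proof.
have [_ [_ [-> _]]] := iter k.+1; have [tau_gt0 _ _ _] := tau_bounds k.
by have [] :=
  tau_next_bounds tau_gt0 eps01 sig01 K_gt0 (norm1_ge0 _) (model_term_le k.+1).
Qed.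

Lemma tmin_gt0 : 0 < tmin.
Proof.
rewrite lt_min tau0_gt0 mulr_gt0 ?divr_gt0 //; case/andP: eps01; case/andP: sig01; lra.
Qed.

Lemma kq_gt0 : 0 < kq.
Proof.
have [sig0 _] := andP sig01; have tze0 := mulr_gt0 tmin_gt0 ze_gt0.
by rewrite /kq lt_min; apply/andP; split; apply: divr_gt0; rewrite ?ltr_wpDl.
Qed.

Lemma model_reduction_bounds k :
  sig * norm1 (c (x k)) <= dqk k /\ kq * norm2 (d k) ^+ 2 <= dqk k.
Proof.
have [_ _ tmin_le tau_den] := tau_bounds k.
by apply: model_reduction_lower_bounds tmin_gt0 tmin_le ze_gt0 _ C_ge0 tau_den _;
  [case/andP: sig01 | exact: step_sqr_le].
Qed.

Lemma step_sqr_gt0 k : 0 < norm2 (d k) ^+ 2.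
Proof.
rewrite lt_def sqr_ge0 andbT sqrf_eq0; apply/eqP => /norm2_eq0 d0.
have [kkt [Jd _]] := iter k; rewrite d0 mulmx0 add0r in kkt.
rewrite d0 mulmx0 in Jd; apply: (@nonterm k); rewrite kkt subrr.
by split=> //; apply/eqP; rewrite -oppr_eq0 -Jd.
Qed.

Lemma model_reduction_gt0 k : 0 < dqk k.
Proof.
have [_ kq_le] := model_reduction_bounds k.
exact: lt_le_trans (mulr_gt0 kq_gt0 (step_sqr_gt0 k)) kq_le.
Qed.

Definition f_model k a La := f (x k + a *: d k) <=
  f (x k) + a * dotv (gf (x k)) (d k) + 2^-1 * La * a ^+ 2 * norm2 (d k) ^+ 2.

Definition c_model k a i ga := `|c (x k + a *: d k) i ord0| <=
  `|c (x k) i ord0 + a * dotv (gradc J (x k) i) (d k)|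
  + 2^-1 * ga * a ^+ 2 * norm2 (d k) ^+ 2.

Lemma f_model_holds k a La : L <= La -> X (x k + a *: d k) -> f_model k a La.
Proof.
move=> L_le Xa; have := descent_model convX grad_f L_ge0 L_le lip_gf (Xx k) Xa.
by rewrite /f_model ler_norml => /andP[_]; lra.
Qed.

Lemma c_model_holds k a i ga : gam i <= ga -> X (x k + a *: d k) -> c_model k a i ga.
Proof.
move=> gam_le Xa.
have grad_ci z : X z -> has_gradient (fun w => c w i ord0) (gradc J z i) z.
  by move=> Xz; exact: grad_c Xz i.
have := descent_model convX grad_ci (gam_ge0 i) gam_le (lip_gc i) (Xx k) Xa.
rewrite /c_model /=; set B := c (x k) i ord0 + _.
rewrite -addrA -opprD -/B => model_err.
by have := ler_normD (c (x k + a *: d k) i ord0 - B) B; rewrite subrK; lra.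
Qed.

Lemma SD_of_models k a La (ga : 'I_m -> R) :
  0 < a -> f_model k a La -> (forall i, c_model k a i (ga i)) ->
  let Lam := tau k * La + \sum_i ga i in
  (a <= 1 /\ Lam * a * norm2 (d k) ^+ 2 <= 2 * (1 - eta) * dqk k) \/
  (1 < a /\ Lam * a * norm2 (d k) ^+ 2 =
             2 * (1 - eta) * dqk k - 4 * norm1 (c (x k))) ->
  SD f gf c H x d tau eta k a.
Proof.
move=> a0 fm cm /= step; have [_ [Jd _]] := iter k.
have [tau_gt0 _ _ _] := tau_bounds k.
have cm' i : `|c (x k + a *: d k) i ord0| <=
    `|c (x k) i ord0 + a * (J (x k) *m d k) i ord0|
    + 2^-1 * ga i * a ^+ 2 * norm2 (d k) ^+ 2 by rewrite -dotv_gradc; exact: cm.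
apply: le_trans (merit_model_bound Jd (ltW tau_gt0) fm cm') _.
have M0 : 0 <= Num.max (dotv (d k) (H k *m d k)) 0 by rewrite le_max lexx orbT.
rewrite /merit; apply: (sufficient_decrease_of_model _ erefl M0) step => //.
exact: norm1_ge0.
Qed.

Definition steps_bounded_below := exists2 amin, 0 < amin &
  forall k, amin <= alpha k /\ SD f gf c H x d tau eta k (alpha k).

Let Lam2 := tau0 * L + \sum_i gam i + 1.
Let ashort := Num.min 1 (2 * (1 - eta) * kq / Lam2).

Lemma Lam2_gt0 : 0 < Lam2.
Proof.
have : 0 <= \sum_i gam i by apply: sumr_ge0 => i _.
by have := mulr_ge0 (ltW tau0_gt0) L_ge0; rewrite /Lam2; lra.
Qed.

Lemma ashort_gt0 : 0 < ashort.
Proof.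
rewrite /ashort lt_min ltr01 divr_gt0 ?Lam2_gt0 // !mulr_gt0 ?kq_gt0 //.
by case/andP: eta01 => _; rewrite subr_gt0.
Qed.

Lemma SD_of_short_step k a :
  0 < a -> a <= ashort -> X (x k + a *: d k) -> SD f gf c H x d tau eta k a.
Proof.
move=> a0 a_le Xa; apply: (SD_of_models a0 (f_model_holds (lexx L) Xa)).
  by move=> i; exact: c_model_holds (lexx _) Xa.
left; split; first by apply: le_trans a_le _; rewrite ge_min lexx.
have [_ tau_le _ _] := tau_bounds k; have [_ kq_le] := model_reduction_bounds k.
have nd0 := ltW (step_sqr_gt0 k); have [_ eta1] := andP eta01.
have Lam_le : tau k * L + \sum_i gam i <= Lam2.
  by have := ler_wpM2r L_ge0 tau_le; rewrite /Lam2; lra.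
have a_le2 : a <= 2 * (1 - eta) * kq / Lam2.
  by apply: le_trans a_le _; rewrite ge_min lexx orbT.
apply: le_trans (_ : Lam2 * a * norm2 (d k) ^+ 2 <= _).
  by have := ler_wpM2r nd0 (ler_wpM2r (ltW a0) Lam_le).
apply: le_trans (_ : 2 * (1 - eta) * (kq * norm2 (d k) ^+ 2) <= _); last first.
  by rewrite ler_wpM2l //; lra.
have Lam2a : Lam2 * a <= 2 * (1 - eta) * kq by rewrite mulrC -ler_pdivlMr ?Lam2_gt0.
by apply: le_trans (ler_wpM2r nd0 Lam2a) _; rewrite !mulrA.
Qed.

Lemma alg2_steps_bounded_below nu abar :
  generated_by_alg2 X f gf c H x d tau alpha eta nu abar -> steps_bounded_below.
Proof.
case=> /andP[nu0 nu1] [abar0 alg2].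
exists (Num.min abar (nu * ashort)); first by rewrite lt_min abar0 mulr_gt0 ?ashort_gt0.
move=> k; have [j [-> [sd [rejected Xtrial]]]] := alg2 k; split=> //.
case: j => [|j] in sd rejected Xtrial *; first by rewrite expr0 mul1r ge_min lexx.
(* the previous trial step was rejected, so it was longer than ashort *)
have short : ashort < nu ^+ j * abar.
  rewrite ltNge; apply/negP => le_short; apply: (rejected j (ltnSn j)).
  apply: SD_of_short_step le_short (Xtrial j (leqnSn j)).
  by rewrite mulr_gt0 ?exprn_gt0.
by rewrite exprS -mulrA ge_min ler_pM2l // (ltW short) orbT.
Qed.

Section Algorithm1.
Variables (rho Lm1 : R) (gm1 : 'I_m -> R).
Variables (Lkj : nat -> nat -> R) (gkj : nat -> nat -> 'I_m -> R) (jk : nat -> nat).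
Hypotheses (rho_gt1 : 1 < rho) (Lm1_gt0 : 0 < Lm1) (gm1_gt0 : forall i, 0 < gm1 i).

Let Lprev k := if k is k'.+1 then Lkj k' (jk k') else Lm1.
Let gprev k i := if k is k'.+1 then gkj k' (jk k') i else gm1 i.
Let trial k j := alg1_step eta (tau k * Lkj k j + \sum_(i < m) gkj k j i)
  (dqk k) (norm1 (c (x k))) (norm2 (d k) ^+ 2).
Let accepted k j := SD f gf c H x d tau eta k (trial k j) \/
  (f_model k (trial k j) (Lkj k j) /\ forall i, c_model k (trial k j) i (gkj k j i)).

Hypothesis alg1_run : forall k,
  (0 < Lkj k 0%N /\ Lkj k 0%N <= Lprev k) /\
  (forall i, 0 < gkj k 0%N i /\ gkj k 0%N i <= gprev k i) /\
  (forall j, (j < jk k)%N ->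
     ~ accepted k j /\
     (f_model k (trial k j) (Lkj k j) -> Lkj k j.+1 = Lkj k j) /\
     (~ f_model k (trial k j) (Lkj k j) -> Lkj k j.+1 = rho * Lkj k j) /\
     (forall i,
        (c_model k (trial k j) i (gkj k j i) -> gkj k j.+1 i = gkj k j i) /\
        (~ c_model k (trial k j) i (gkj k j i) -> gkj k j.+1 i = rho * gkj k j i))) /\
  accepted k (jk k) /\
  alpha k = trial k (jk k) /\
  (forall j, (j <= jk k)%N -> X (x k + trial k j *: d k)).

Let Lbar := Num.max Lm1 (rho * L).
Let gbar i := Num.max (gm1 i) (rho * gam i).
Let estimates_bounded k j :=
  0 < Lkj k j <= Lbar /\ forall i, 0 < gkj k j i <= gbar i.

Lemma alg1_estimates_step k j :
  (j < jk k)%N -> estimates_bounded k j -> estimates_bounded k j.+1.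
Proof.
move=> jlt [Lb gb].
have [_ [_ [/(_ j jlt) [_ [keepL [growL upd_g]]] [_ [_ Xtrial]]]]] := alg1_run k.
have Xj := Xtrial j (ltnW jlt); have rho0 := lt_trans ltr01 rho_gt1.
split=> [|i].
  apply: backtrack_estimate_bounded rho0 (fun h => f_model_holds h Xj) keepL growL Lb _.
  by rewrite le_max lexx orbT.
have [keepg growg] := upd_g i.
apply: backtrack_estimate_bounded rho0 (fun h => c_model_holds h Xj)
  keepg growg (gb i) _.
by rewrite le_max lexx orbT.
Qed.

Lemma alg1_estimates_bounded k j : (j <= jk k)%N -> estimates_bounded k j.
Proof.
have start k' :
    Lprev k' <= Lbar -> (forall i, gprev k' i <= gbar i) -> estimates_bounded k' 0.
  move=> Lp gp; have [[L0 Lle] [g0 _]] := alg1_run k'.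
  split; first by rewrite L0 (le_trans Lle).
  by move=> i; have [gi0 gle] := g0 i; rewrite gi0 (le_trans gle).
elim: k j => [|k IHk]; elim=> [|j IHj] jle.
- by apply: start => [|i]; rewrite le_max lexx.
- exact: alg1_estimates_step jle (IHj (ltnW jle)).
- have [/andP[_ Lb] gb] := IHk (jk k) (leqnn _).
  by apply: start => // i; have /andP[] := gb i.
- exact: alg1_estimates_step jle (IHj (ltnW jle)).
Qed.

Lemma alg1_run_steps_bounded_below : steps_bounded_below.
Proof.
have Lbar0 : 0 < Lbar by rewrite lt_max Lm1_gt0.
have gbar0 i : 0 < gbar i by rewrite lt_max gm1_gt0.
pose Lmax := tau0 * Lbar + \sum_i gbar i.
have sum_gbar0 : 0 <= \sum_i gbar i by apply: sumr_ge0 => i _; apply: ltW.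
have Lmax0 : 0 < Lmax := ltr_wpDr sum_gbar0 (mulr_gt0 tau0_gt0 Lbar0).
exists (Num.min 1 (2 * (1 - eta) * kq / Lmax)).
  rewrite lt_min ltr01 divr_gt0 // !mulr_gt0 ?kq_gt0 //.
  by case/andP: eta01 => _; rewrite subr_gt0.
move=> k; have [/andP[L0 Lb] gb] := alg1_estimates_bounded (leqnn (jk k)).
have [_ [_ [_ [acc [-> _]]]]] := alg1_run k; have [tau_gt0 tau_le _ _] := tau_bounds k.
have sum_g0 : 0 <= \sum_i gkj k (jk k) i.
  by apply: sumr_ge0 => i _; have /andP[/ltW] := gb i.
have Lam0 : 0 < tau k * Lkj k (jk k) + \sum_i gkj k (jk k) i.
  exact: ltr_wpDr sum_g0 (mulr_gt0 tau_gt0 L0).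
have Lam_le : tau k * Lkj k (jk k) + \sum_i gkj k (jk k) i <= Lmax.
  apply: lerD; first exact: ler_pM (ltW tau_gt0) (ltW L0) tau_le Lb.
  by apply: ler_sum => i _; have /andP[] := gb i.
have [_ kq_le] := model_reduction_bounds k.
have /= [a0 a_ge step] := alg1_step_spec eta01 Lam0 Lam_le (step_sqr_gt0 k) kq_gt0 kq_le
  (norm1_ge0 (c (x k))).
split=> //; case: acc => [//|[fm cm]].
exact: SD_of_models a0 fm cm step.
Qed.

End Algorithm1.

Lemma alg1_steps_bounded_below rho Lm1 gm1 :
  generated_by_alg1 X f gf c J H x d tau alpha eta rho Lm1 gm1 -> steps_bounded_below.
Proof.
by case=> rho1 [Lm0 [gm0 [Lkj [gkj [jk run]]]]]; exact: alg1_run_steps_bounded_below rho1 Lm0 gm0 run.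
Qed.

Lemma model_reduction_vanishes : steps_bounded_below -> lim0 dqk.
Proof.
case=> amin amin0 steps; have [eta0 _] := andP eta01.
pose psi k := tau k * (f (x k) - flow) + norm1 (c (x k)).
apply: (telescoping_lim0 (psi := psi) (mulr_gt0 eta0 amin0)) => k.
- have [tau_gt0 _ _ _] := tau_bounds k; have := f_ge (Xx k).
  by rewrite -subr_ge0 => /(mulr_ge0 (ltW tau_gt0)) ?; rewrite addr_ge0 ?norm1_ge0.
- exact: ltW (model_reduction_gt0 k).
have [amin_le sd] := steps k; have [_ [_ [_ [_ xk1]]]] := iter k.
move: sd; rewrite /SD /merit -xk1 /psi => sd.
have f_flow : 0 <= f (x k.+1) - flow by rewrite subr_ge0 f_ge.
have := ler_wpM2r f_flow (tau_nonincreasing k).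
have := ler_wpM2r (ltW (model_reduction_gt0 k)) (ler_wpM2l (ltW eta0) amin_le).
rewrite /dqk; lra.
Qed.

Lemma iterates_converge : steps_bounded_below ->
  lim0 (fun k => norm2 (d k)) /\ lim0 (fun k => norm2 (c (x k))).
Proof.
move=> /model_reduction_vanishes dq0; have [sig0 _] := andP sig01; split.
- apply: lim0_sqr; apply: (lim0_le_scale (C := kq^-1)) dq0 => [|k].
    by rewrite invr_ge0 ltW ?kq_gt0.
  have [_ kq_le] := model_reduction_bounds k.
  by rewrite ger0_norm ?sqr_ge0 // mulrC ler_pdivlMr ?kq_gt0 // mulrC.
- apply: (lim0_le_scale (C := sig^-1)) dq0 => [|k]; first by rewrite invr_ge0 ltW.
  have [sig_le _] := model_reduction_bounds k.
  rewrite ger0_norm ?norm2_ge0 // (le_trans (norm2_le_norm1 _)) //.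
  by rewrite mulrC ler_pdivlMr // mulrC.
Qed.

Lemma iterates_converge_of_linesearch rho Lm1 gm1 nu abar :
  generated_by_alg1 X f gf c J H x d tau alpha eta rho Lm1 gm1 \/
  generated_by_alg2 X f gf c H x d tau alpha eta nu abar ->
  lim0 (fun k => norm2 (d k)) /\ lim0 (fun k => norm2 (c (x k))).
Proof.
move=> alg; apply: iterates_converge.
by case: alg => [/alg1_steps_bounded_below | /alg2_steps_bounded_below].
Qed.

End Convergence.

Unset Implicit Arguments. Set Strict Implicit.

Theorem theorem2p18 (R : realType) (n m : nat)
  (X : 'cV[R]_n -> Prop) (f : 'cV[R]_n -> R) (gf : 'cV[R]_n -> 'cV[R]_n)
  (c : 'cV[R]_n -> 'cV[R]_m) (J : 'cV[R]_n -> 'M[R]_(m, n))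
  (H : nat -> 'M[R]_n) (x d : nat -> 'cV[R]_n) (y : nat -> 'cV[R]_m)
  (tau alpha : nat -> R)
  (tau0 eps sig eta rho Lm1 nu abar : R) (gm1 : 'I_m -> R) :
  standing_assumption X f gf c J ->
  (forall k, X (x k)) ->
  matrix_assumption H (fun k => J (x k)) ->
  0 < tau0 -> 0 < eps < 1 -> 0 < sig < 1 -> 0 < eta < 1 ->
  common_iteration gf c J H x d y tau alpha tau0 eps sig ->
  no_finite_termination gf c J x y ->
  (generated_by_alg1 X f gf c J H x d tau alpha eta rho Lm1 gm1 \/
   generated_by_alg2 X f gf c H x d tau alpha eta nu abar) ->
  lim0 (fun k => norm2 (d k)) /\
  lim0 (fun k => norm2 (c (x k))) /\
  lim0 (fun k => norm2 (gf (x k) + (J (x k))^T *m y k)).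
Proof.
move=> SA Xx [kH [ze [kH0 [ze0 HM]]]] tau0_gt0 eps01 sig01 eta01 iter nonterm alg.
case: SA => _ [convX [grad_f [_ [grad_c [[flow f_ge] [[Bg gB] [lip_gf
  [[Bc cB] [_ [lip_gc [s s0 sv]]]]]]]]]]].
have [L L0 lipL] := lipschitz_const_ge0 lip_gf.
have [gam gam0 lip_gam] := fin_all_exists2 (fun i => lipschitz_const_ge0 (lip_gc i)).
have Bg0 : 0 <= Bg := le_trans (norm2_ge0 _) (gB _ (Xx 0%N)).
have Bc0 : 0 <= Bc := le_trans (norm2_ge0 _) (cB _ (Xx 0%N)).
have [K K0 [C C0 bounds]] := subproblem_bounds m n s0 (ltW kH0) ze0 Bg0 Bc0.
have step_bounds k :
    dotv (gf (x k)) (d k) + Num.max (dotv (d k) (H k *m d k)) 0 <= K * norm1 (c (x k))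
    /\ norm2 (d k) ^+ 2 <=
       2 / ze * Num.max (dotv (d k) (H k *m d k)) 0 + C * norm1 (c (x k)).
  have [kkt [Jd _]] := iter k; have [_ [Hb Hc]] := HM k.
  exact: bounds (sv _ (Xx k)) Hb Hc kkt Jd (gB _ (Xx k)) (cB _ (Xx k)).
have [d_lim c_lim] := iterates_converge_of_linesearch convX grad_f grad_c L0 lipL
  gam0 lip_gam f_ge Xx iter nonterm tau0_gt0 eps01 sig01 eta01 K0 C0 ze0
  (fun k => proj1 (step_bounds k)) (fun k => proj2 (step_bounds k)) alg.
do 2!split=> //; apply: lim0_le_scale (ltW kH0) _ d_lim => k.
have [kkt _] := iter k; have [_ [Hb _]] := HM k.
have -> : gf (x k) = - (H k *m d k + (J (x k))^T *m y k) by rewrite kkt opprK.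
by rewrite opprD subrK norm2N ger0_norm ?norm2_ge0 //; exact: Hb.
Qed.
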